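(* Let $A$ be a quantum B-algebra, let $X,Y,F\in U(A)$ and let $F$ be a filter of $A$. Then $\mu_F(X)\cdot\mu_F(Y)\subseteq\mu_F(X\cdot Y)$. Moreover, $\mu_F:U(A)\to U(A)$ is a conucleus on $U(A)$, and the set $U(F)=\{U\in U(A)\mid U\subseteq F\}=\{\mu_F(X)\mid X\in U(A)\}$, equipped with the restriction of the multiplication of $U(A)$, is a subquantale of $U(A)$.
   Context: A quantum B-algebra is a poset $(A,\le)$ with binary operations $\to,\leadsto$ such that for all $x,y,z\in A$: $y\to z\le(x\to y)\to(x\to z)$; $y\leadsto z\le(x\leadsto y)\leadsto(x\leadsto z)$; $y\le z$ implies $x\to y\le x\to z$; and $x\le y\to z$ iff $y\le x\leadsto z$. $U(A)$ denotes the set of all upper subsets of $A$ (subsets $X$ such that $b\in X$ and $a\ge b$ imply $a\in X$; the empty set included), ordered by inclusion; it is a quantale (complete lattice whose joins are unions, with an associative multiplication distributing over arbitrary joins on both sides) under $X\cdot Y=\{a\in A\mid \exists y\in Y:\ y\to a\in X\}$. A filter of $A$ is a nonempty $F\in U(A)$ with $F\cdot F\subseteq F$. For $F,X\in U(A)$, $\mu_F(X)=F\cap X$. A conucleus on a quantale $Q$ is a map $g:Q\to Q$ that is order preserving, satisfies $g(a)\le a$ and $g(g(a))=g(a)$, and $g(a)\cdot g(b)\le g(a\cdot b)$ for all $a,b$. A subquantale is a subset closed under arbitrary joins and under the multiplication. *)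

Record qBalg := QBalg {
  car :> Type;
  le : car -> car -> Prop;
  imp : car -> car -> car;
  limp : car -> car -> car;
  le_refl : forall x, le x x;
  le_antisym : forall x y, le x y -> le y x -> x = y;
  le_trans : forall x y z, le x y -> le y z -> le x z;
  qb_ax1 : forall x y z, le (imp y z) (imp (imp x y) (imp x z));
  qb_ax2 : forall x y z, le (limp y z) (limp (limp x y) (limp x z));
  qb_ax3 : forall x y z, le y z -> le (imp x y) (imp x z);
  qb_ax4 : forall x y z, le x (imp y z) <-> le y (limp x z)
}.

Definition subset {T : Type} (X Y : T -> Prop) : Prop := forall a, X a -> Y a.
Definition seteq {T : Type} (X Y : T -> Prop) : Prop := forall a, X a <-> Y a.

(** Upper subsets (elements of U(A)); the empty set is allowed. *)
Definition upper (A : qBalg) (X : A -> Prop) : Prop :=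
  forall a b : A, X b -> le A b a -> X a.

Definition umul (A : qBalg) (X Y : A -> Prop) : A -> Prop :=
  fun a => exists y, Y y /\ X (imp A y a).

(** Arbitrary joins in U(A) are unions. *)
Definition bigunion (A : qBalg) (I : Type) (f : I -> A -> Prop) : A -> Prop :=
  fun a => exists i, f i a.

Definition filter (A : qBalg) (F : A -> Prop) : Prop :=
  upper A F /\ (exists a, F a) /\ subset (umul A F F) F.

Definition mu (A : qBalg) (F X : A -> Prop) : A -> Prop := fun a => F a /\ X a.

Definition is_conucleus (A : qBalg) (g : (A -> Prop) -> (A -> Prop)) : Prop :=
  (forall X, upper A X -> upper A (g X)) /\
  (forall X Y, upper A X -> upper A Y -> subset X Y -> subset (g X) (g Y)) /\
  (forall X, upper A X -> subset (g X) X) /\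
  (forall X, upper A X -> seteq (g (g X)) (g X)) /\
  (forall X Y, upper A X -> upper A Y -> subset (umul A (g X) (g Y)) (g (umul A X Y))).

(** Subquantale of U(A): a set of elements of U(A) closed under arbitrary
    joins (unions, including the empty one) and multiplication. *)
Definition is_subquantale (A : qBalg) (S : (A -> Prop) -> Prop) : Prop :=
  (forall X, S X -> upper A X) /\
  (forall (I : Type) (f : I -> A -> Prop), (forall i, S (f i)) -> S (bigunion A I f)) /\
  (forall X Y, S X -> S Y -> S (umul A X Y)).

Definition UF (A : qBalg) (F : A -> Prop) : (A -> Prop) -> Prop :=
  fun U => upper A U /\ subset U F.


Set Implicit Arguments.

(* mu_F(X) = F /\ X is an intersection, so it is deflationary, idempotent and
   monotone, and it preserves upper sets.  Since the product of U(A) is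
   monotone in both arguments, mu_F(X) . mu_F(Y) lies both in X . Y and in
   F . F, which is contained in F because F is a filter.  The same two facts show that U(F) is closed under products;
   closure under unions is clear. *)

Section UpperSets.

Variable A : qBalg.
Implicit Types X Y Z F : A -> Prop.

Lemma subset_trans X Y Z : subset X Y -> subset Y Z -> subset X Z.
Proof. intros XY YZ a Xa; apply YZ, XY, Xa. Qed.

Lemma umul_upper X Y : upper A X -> upper A (umul A X Y).
Proof.
  intros hX a b [y [Yy Xyb]] ba.
  exists y; split; [exact Yy |].
  apply (hX _ _ Xyb), qb_ax3, ba.
Qed.

Lemma umul_subset X X' Y Y' :
  subset X X' -> subset Y Y' -> subset (umul A X Y) (umul A X' Y').
Proof.
  intros XX' YY' a [y [Yy Xya]].
  exists y; split; [apply YY', Yy | apply XX', Xya].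
Qed.

Lemma bigunion_upper (I : Type) (f : I -> A -> Prop) :
  (forall i, upper A (f i)) -> upper A (bigunion A I f).
Proof. intros hf a b [i fib] ba; exists i; apply (hf i _ _ fib ba). Qed.

Lemma bigunion_subset (I : Type) (f : I -> A -> Prop) Z :
  (forall i, subset (f i) Z) -> subset (bigunion A I f) Z.
Proof. intros fZ a [i fia]; apply (fZ i), fia. Qed.

Lemma mu_upper F X : upper A F -> upper A X -> upper A (mu A F X).
Proof. intros hF hX a b [Fb Xb] ba; split; [apply (hF _ _ Fb ba) | apply (hX _ _ Xb ba)]. Qed.

Lemma mu_subsetl F X : subset (mu A F X) F.
Proof. intros a [Fa _]; exact Fa. Qed.

Lemma mu_subsetr F X : subset (mu A F X) X.
Proof. intros a [_ Xa]; exact Xa. Qed.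

Lemma mu_subset F X Y : subset X Y -> subset (mu A F X) (mu A F Y).
Proof. intros XY a [Fa Xa]; split; [exact Fa | apply XY, Xa]. Qed.

Lemma mu_idem F X : seteq (mu A F (mu A F X)) (mu A F X).
Proof. intros a; unfold mu; tauto. Qed.

Lemma mu_id F X : subset X F -> seteq X (mu A F X).
Proof. intros XF a; specialize (XF a); unfold mu; tauto. Qed.

Lemma umul_sub_closed F X Y :
  subset (umul A F F) F -> subset X F -> subset Y F -> subset (umul A X Y) F.
Proof. intros FF XF YF; exact (subset_trans (umul_subset XF YF) FF). Qed.

Lemma umul_mu_subset F X Y :
  subset (umul A F F) F ->
  subset (umul A (mu A F X) (mu A F Y)) (mu A F (umul A X Y)).
Proof.
  intros FF a XYa; split.
  - exact (umul_sub_closed FF (@mu_subsetl F X) (@mu_subsetl F Y) XYa).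
  - exact (umul_subset (@mu_subsetr F X) (@mu_subsetr F Y) XYa).
Qed.

Lemma mu_conucleus F :
  upper A F -> subset (umul A F F) F -> is_conucleus A (mu A F).
Proof.
  intros hF FF; split; [| split; [| split; [| split]]].
  - intros X; apply mu_upper, hF.
  - intros X Y _ _; apply mu_subset.
  - intros X _; apply mu_subsetr.
  - intros X _; apply mu_idem.
  - intros X Y _ _; apply umul_mu_subset, FF.
Qed.

Lemma UF_mu_image F U :
  upper A F -> UF A F U <-> exists Z, upper A Z /\ seteq U (mu A F Z).
Proof.
  intros hF; split.
  - intros [hU UsubF]; exists U; split; [exact hU | apply mu_id, UsubF].
  - intros [Z [hZ UZ]]; split.
    + intros a b Ub ba; apply UZ; apply UZ in Ub.
      apply (mu_upper hF hZ _ Ub ba).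
    + intros a Ua; apply UZ in Ua; exact (mu_subsetl Ua).
Qed.

Lemma UF_subquantale F : subset (umul A F F) F -> is_subquantale A (UF A F).
Proof.
  intros FF; split; [| split].
  - intros X [hX _]; exact hX.
  - intros I f hf; split.
    + apply bigunion_upper; intros i; apply (hf i).
    + apply bigunion_subset; intros i; apply (hf i).
  - intros X Y [hX XF] [_ YF]; split.
    + apply umul_upper, hX.
    + apply umul_sub_closed; assumption.
Qed.

End UpperSets.

Theorem lemma3p1 (A : qBalg) (X Y F : A -> Prop)
  (hX : upper A X) (hY : upper A Y) (hF : upper A F) (hFf : filter A F) :
  subset (umul A (mu A F X) (mu A F Y)) (mu A F (umul A X Y)) /\
  is_conucleus A (mu A F) /\
  (forall U, UF A F U <-> exists Z, upper A Z /\ seteq U (mu A F Z)) /\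
  is_subquantale A (UF A F).
Proof.
  destruct hFf as [_ [_ FF]].
  split; [| split; [| split]].
  - apply umul_mu_subset, FF.
  - apply mu_conucleus; assumption.
  - intros U; apply UF_mu_image, hF.
  - apply UF_subquantale, FF.
Qed.
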